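(* Let $n\in\mathbb{N}$ and let $\sigma$ be a probability distribution on $[n]$ such that $\sigma_{\le i}>\tfrac in$ for every $i\in[n-1]$, and let $\pi=\bigotimes_{i=1}^{n-1}\mathrm{Geom}\big(1-\frac{i}{n\sigma_{\le i}}\big)$. For $(\vec d,i)\in\mathbb{N}_0^{n-1}\times[n]$ let $\nu(\vec d,i)$ be the probability that the transitional state $(\vec d,i)$ occurs during one transition according to $P$ started from $\vec d_{\mathrm{start}}\sim\pi$. Then \[\nu(\vec d,i)=\pi(\vec d)\cdot\sigma_{\le i}\quad\text{for all }(\vec d,i)\in\mathbb{N}_0^{n-1}\times[n].\]
   Context: For a probability distribution $\sigma$ on $[n]$ write $\sigma_i=\Pr_{i^*\sim\sigma}[i^*=i]$ and $\sigma_{\le i}=\Pr_{i^*\sim\sigma}[i^*\le i]$. $\mathrm{Geom}(p)$ is the number of failed independent Bernoulli($p$) trials before the first success (support $\mathbb{N}_0$); $\bigotimes$ is the product of independent distributions, and $\pi(\vec d)$ is the probability mass at $\vec d$. Let $\vec e_i$ be the $i$-th unit vector in $\mathbb{N}_0^{n-1}$ for $i\in[n-1]$, with conventions $d_n=\infty$, $\vec e_n=\vec0$. A transition according to $P$ from a state $\vec d_{\mathrm{start}}\in\mathbb{N}_0^{n-1}$ passes through transitional states $(\vec d,i)\in\mathbb{N}_0^{n-1}\times[n]$: (1) sample $i^*\sim\sigma$ and go to $(\vec d_{\mathrm{start}},i^* )$. (2) While in $(\vec d,i)$: if $d_i>0$, then with probability $(i-1)/i$ move to $(\vec d-\vec e_i+\vec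 e_{i-1},i)$ and with probability $1/i$ end the transition in state $\vec d-\vec e_i$; if $d_i=0$, move to $(\vec d,i+1)$. *)

From HB Require Import structures.
From mathcomp Require Import all_boot all_order all_algebra.
From mathcomp Require Import all_classical all_reals all_analysis.
Set Implicit Arguments. Unset Strict Implicit. Unset Printing Implicit Defensive.
Import Order.TTheory GRing.Theory Num.Theory.
Local Open Scope ring_scope.

(* Indices of [n] are natural numbers 1..n.
   A state vec d in N_0^{n-1} is a finite function d : 'I_(n-1) -> nat, where
   the ordinal j stores the coordinate d_{j+1}.
   A transitional state (d,i) is a pair (d, i) with i : nat (only 1 <= i <= n
   ever carries mass).  sigma : nat -> R, only its values on 1..n matter. *)

Definition vec (n : nat) := {ffun 'I_n.-1 -> nat}.
Definition tstate (n : nat) := (vec n * nat)%type.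

(* coordinate d_i for i in [n-1]; 0 otherwise (d_n = oo is handled separately) *)
Definition coord (n : nat) (d : vec n) (i : nat) : nat :=
  \sum_(j : 'I_n.-1 | j.+1 == i) d j.

Definition sigma_le (R : realType) (sigma : nat -> R) (i : nat) : R :=
  \sum_(1 <= j < i.+1) sigma j.

Definition geom_p (R : realType) (n : nat) (sigma : nat -> R) (i : nat) : R :=
  1 - i%:R / (n%:R * sigma_le sigma i).

Definition geom_pmf (R : realType) (p : R) (k : nat) : R := (1 - p) ^+ k * p.

Definition pi_mass (R : realType) (n : nat) (sigma : nat -> R) (d : vec n) : R :=
  \prod_(j : 'I_n.-1) geom_pmf (geom_p n sigma j.+1) (d j).

(* Initial transitional state: d_start ~ pi, i^* ~ sigma *)
Definition init_mass (R : realType) (n : nat) (sigma : nat -> R)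
  (x : tstate n) : R :=
  pi_mass sigma x.1 * (if (1 <= x.2 <= n)%N then sigma x.2 else 0).

(* "d_i > 0" with the convention d_n = oo *)
Definition pos_coord (n : nat) (x : tstate n) : bool :=
  (x.2 == n) || (0 < coord x.1 x.2)%N.

(* The (unique) non-terminating successor of a transitional state:
   if d_i > 0 : (d - e_i + e_{i-1}, i)   (e_n = 0, and e_0 = 0 is irrelevant
                                          since the move then has prob. 0)
   if d_i = 0 : (d, i+1) *)
Definition next_state (n : nat) (x : tstate n) : tstate n :=
  if pos_coord x then
    ([ffun j : 'I_n.-1 => (x.1 j - (j.+1 == x.2) + (j.+1 == x.2.-1))%N], x.2)
  else (x.1, x.2.+1).

(* probability of the move to next_state (the rest is termination) *)
Definition move_prob (R : realType) (n : nat) (x : tstate n) : R :=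
  if pos_coord x then (x.2.-1)%:R / (x.2)%:R else 1.

Local Open Scope ereal_scope.

(* first_visit sigma tgt k y:
   for y <> tgt, probability of being in y after k moves without having
   visited tgt before; for y = tgt, probability that tgt is visited for the
   first time after exactly k moves. *)
Fixpoint first_visit (R : realType) (n : nat) (sigma : nat -> R)
  (tgt : tstate n) (k : nat) (y : tstate n) : \bar R :=
  match k with
  | 0 => (init_mass sigma y)%:E
  | k'.+1 =>
      \esum_(x in [set x : tstate n | x <> tgt /\ next_state x = y])
        (first_visit sigma tgt k' x * (move_prob R x)%:E)
  end.

Definition nu (R : realType) (n : nat) (sigma : nat -> R) (tgt : tstate n)
  : \bar R :=
  \sum_(k <oo) first_visit sigma tgt k tgt.

(* Every move of positive probability strictly increases the pair (i, d_{i-1})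
   lexicographically, so each transitional state is visited at most once and a
   state t whose only predecessor of positive move probability is p satisfies
   nu(t) = init(t) + nu(p) P(p -> t).  The predecessor of (d, i+1) is (d, i),
   left with probability 1, when d_i = 0, and (d - e_i + e_{i+1}, i+1), left with
   probability i/(i+1), otherwise.  Induction on i and then on d_i reduces the
   claim to the balance identity (1 - p_k) sigma_{<=k} = k/n of the geometric
   parameters p_k, together with sigma_{<=n} = 1. *)

From HB Require Import structures.
From mathcomp Require Import all_boot all_order all_algebra.
From mathcomp Require Import all_classical all_reals all_analysis.
From mathcomp Require Import zify.
From mathcomp.algebra_tactics Require Import ring.
Import Order.TTheory GRing.Theory Num.Theory.
Set Implicit Arguments. Unset Strict Implicit. Unset Printing Implicit Defensive.
Local Open Scope ring_scope.

Section States.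
Variable n : nat.
Implicit Types (d : vec n) (x : tstate n).

Lemma coordE d (j : 'I_n.-1) : coord d j.+1 = d j.
Proof. by rewrite /coord (big_pred1 j) // => k /=; rewrite eqSS. Qed.

Lemma coord_eq0 d k : (k == 0)%N || (n.-1 < k)%N -> coord d k = 0%N.
Proof.
move=> hk; rewrite /coord big_pred0 // => j; apply/negP => /eqP hj.
by have := ltn_ord j; lia.
Qed.

Definition incr d k : vec n := [ffun j => d j + (j.+1 == k)]%N.
Definition decr d k : vec n := [ffun j => d j - (j.+1 == k)]%N.

Definition rank x : nat *l nat := (x.2, coord x.1 x.2.-1).

Definition prev_state x : tstate n :=
  if coord x.1 x.2.-1 == 0%N then (x.1, x.2.-1)
  else (incr (decr x.1 x.2.-1) x.2, x.2).

Lemma pos_coord_le x : pos_coord x -> (x.2 <= n)%N.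
Proof.
rewrite /pos_coord; case/orP => [/eqP-> // | ].
by case: (leqP x.2 n) => // x2_gt; rewrite coord_eq0 //; lia.
Qed.

Lemma move_prob_neq0 (R : realType) x : move_prob R x != 0 ->
  ~~ pos_coord x || (1 < x.2 <= n)%N.
Proof.
rewrite /move_prob; case: ifP => //= /pos_coord_le.
case: x.2 => [|[|i]] //=; by rewrite ?mul0r ?eqxx.
Qed.

Lemma rank_next_state (R : realType) x : move_prob R x != 0 ->
  (rank x < rank (next_state x))%O.
Proof.
move/move_prob_neq0; rewrite /rank /next_state.
case: ifP => [_ /= x2 | _ _]; rewrite ltxi_pair /= ?leEnat ?ltEnat; last lia.
have j_lt : (x.2.-2 < n.-1)%N by lia.
have -> : x.2.-1 = (Ordinal j_lt).+1 by rewrite /=; lia.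
rewrite !coordE ffunE /=.
have -> : (x.2.-2.+1 == x.2) = false by lia.
rewrite eqxx; lia.
Qed.

Lemma prev_next_state (R : realType) x : move_prob R x != 0 ->
  prev_state (next_state x) = x.
Proof.
case: x => d i /move_prob_neq0; rewrite /next_state.
case: ifP => [pos /= i_range | /negbT]; rewrite /prev_state /=; last first.
  by rewrite /pos_coord => /norP[_]; rewrite -eqn0Ngt /= => /eqP-> _; rewrite eqxx.
have j_lt : (i.-2 < n.-1)%N by lia.
have -> : i.-1 = (Ordinal j_lt).+1 by rewrite /=; lia.
rewrite coordE ffunE eqxx addn1 /=; congr pair.
apply/ffunP => j; rewrite /incr /decr !ffunE.
have dj_gt0 : j.+1 = i -> (0 < d j)%N.
  by move=> ji; move: pos; rewrite /pos_coord -ji coordE /=; have := ltn_ord j; lia.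
by case: eqP => [/dj_gt0|_]; case: eqP => /=; lia.
Qed.

Lemma pos_coord_prev_state d i : (0 < i <= n)%N ->
  pos_coord (prev_state (d, i)) = (coord d i.-1 != 0%N).
Proof.
move=> i_range; rewrite /prev_state; case: eqP => [c0 | /eqP c_neq0] /=.
  by rewrite /pos_coord /= c0 orbF; apply/negbTE; lia.
have i_gt1 : (1 < i)%N by case: (i) i_range c_neq0 => [|[|]] //; rewrite coord_eq0.
rewrite /pos_coord /=; case: (ltnP i n) => [i_lt | ]; last by lia.
have j_lt : (i.-1 < n.-1)%N by lia.
have -> : i = (Ordinal j_lt).+1 by rewrite /=; lia.
by rewrite coordE /incr /decr !ffunE /= eqxx; lia.
Qed.

Lemma next_prev_state d i : (0 < i <= n)%N ->
  next_state (prev_state (d, i)) = (d, i).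
Proof.
move=> i_range; rewrite /next_state pos_coord_prev_state // /prev_state.
case: eqP => [c0 | /eqP c_neq0] /=; first by rewrite prednK //; lia.
congr pair; apply/ffunP => j; rewrite /incr /decr !ffunE /=.
have dj_gt0 : j.+1 = i.-1 -> (0 < d j)%N.
  by move=> ji; move: c_neq0; rewrite -ji coordE; lia.
by case: eqP => [/dj_gt0|_]; case: eqP => /=; lia.
Qed.

Lemma move_prob_prev_state (R : realType) d i : (0 < i <= n)%N ->
  move_prob R (prev_state (d, i)) =
  if coord d i.-1 == 0%N then 1 else i.-1%:R / i%:R.
Proof.
move=> i_range; rewrite /move_prob pos_coord_prev_state // /prev_state.
by case: eqP.
Qed.

Lemma coord_shift d i : coord (incr (decr d i) i.+1) i = (coord d i).-1.
Proof.
have [i_out | i_in] := boolP ((i == 0%N) || (n.-1 < i)%N); first by rewrite !coord_eq0.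
have j_lt : (i.-1 < n.-1)%N by lia.
have -> : i = (Ordinal j_lt).+1 by rewrite /=; lia.
rewrite !coordE /incr /decr !ffunE /= eqxx.
by rewrite (_ : (_ == _.+2) = false) ?addn0 ?subn1 //; lia.
Qed.
End States.

Local Open Scope ereal_scope.

Lemma esum_pred1 (R : realType) (T : choiceType) (S : set T) (a : T -> \bar R)
    (t : T) :
  S t -> (forall x, S x -> x <> t -> a x = 0) -> 0 <= a t ->
  \esum_(x in S) a x = a t.
Proof.
move=> St a0 at0; rewrite -(esum_set1 at0) esum_mkcond [RHS]esum_mkcond.
apply: eq_esum => x _; have [->|xt] := eqVneq x t; first by rewrite !mem_set.
have xt' : x <> t by apply/eqP.
rewrite (@memNset _ [set t]%classic) //.
by case: ifP => // /set_mem Sx; apply: a0.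
Qed.

Section FirstVisit.
Variables (R : realType) (n : nat) (sigma : nat -> R).
Hypothesis init_ge0 : forall y : tstate n, (0 <= init_mass sigma y)%R.
Implicit Types (d : vec n) (t x y z : tstate n).

Lemma move_prob_ge0 x : (0 <= move_prob R x)%R.
Proof. by rewrite /move_prob; case: ifP. Qed.

Lemma first_visit_ge0 t k y : 0 <= first_visit sigma t k y.
Proof.
elim: k y => [|k IH] y /=; first by rewrite lee_fin.
by apply: esum_ge0 => x _; rewrite mule_ge0 // lee_fin move_prob_ge0.
Qed.

Lemma eq_first_visit_target k t1 t2 z :
  (rank z <= rank t1)%O -> (rank z <= rank t2)%O ->
  first_visit sigma t1 k z = first_visit sigma t2 k z.
Proof.
elim: k z => [//|k IH] z z_t1 z_t2 /=.
rewrite esum_mkcond [RHS]esum_mkcond; apply: eq_esum => x _.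
have [m0|m0] := eqVneq (move_prob R x) 0%R; first by rewrite m0 !mule0 !if_same.
have [xz|xz] := eqVneq (next_state x) z; last first.
  by rewrite !memNset // => -[_ /eqP]; rewrite (negbTE xz).
have x_lt_z : (rank x < rank z)%O by rewrite -xz; exact: rank_next_state m0.
have x_t1 : x <> t1 by move=> e; move: (lt_le_trans x_lt_z z_t1); rewrite e ltxx.
have x_t2 : x <> t2 by move=> e; move: (lt_le_trans x_lt_z z_t2); rewrite e ltxx.
by rewrite !mem_set // (IH x) // ltW // (lt_le_trans x_lt_z).
Qed.

Lemma nu_first_step t :
  nu sigma t = (init_mass sigma t)%:E + \sum_(k <oo) first_visit sigma t k.+1 t.
Proof.
rewrite /nu nneseries_recl // => [|k _]; last exact: first_visit_ge0.
rewrite -(@nneseries_addn _ _ 1) => [|k]; last exact: first_visit_ge0.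
by under eq_eseriesr do rewrite addn1.
Qed.

Lemma nu_unique_pred t p : next_state p = t -> move_prob R p != 0%R ->
  (forall x, next_state x = t -> move_prob R x != 0%R -> x = p) ->
  nu sigma t = (init_mass sigma t)%:E + nu sigma p * (move_prob R p)%:E.
Proof.
move=> pt p_gt0 p_uniq; rewrite nu_first_step; congr (_ + _).
have p_lt_t : (rank p < rank t)%O by rewrite -pt; exact: rank_next_state p_gt0.
have p_neq_t : p <> t by move=> e; move: p_lt_t; rewrite e ltxx.
rewrite muleC -nneseriesZl => [|k _]; last exact: first_visit_ge0.
apply: eq_eseriesr => k _ /=.
rewrite (@esum_pred1 _ _ _ _ p) //; last first.
- by rewrite mule_ge0 ?first_visit_ge0 // lee_fin move_prob_ge0.
- move=> x [_ xt] xp; have [->|x_gt0] := eqVneq (move_prob R x) 0%R.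
    by rewrite mule0.
  by move: xp; rewrite (p_uniq x xt x_gt0).
rewrite muleC (@eq_first_visit_target k t p p) //; exact: ltW.
Qed.

Lemma nu_no_pred t : (forall x, next_state x = t -> move_prob R x = 0%R) ->
  nu sigma t = (init_mass sigma t)%:E.
Proof.
move=> no_pred; rewrite nu_first_step eseries0 ?adde0 // => k _ _ /=.
by apply: esum1 => x [_ /no_pred->]; rewrite mule0.
Qed.

Lemma nu_prev_state d i : (0 < i <= n)%N ->
  nu sigma (d, i) = (init_mass sigma (d, i))%:E +
    nu sigma (prev_state (d, i)) * (move_prob R (prev_state (d, i)))%:E.
Proof.
move=> i_range; apply: nu_unique_pred; first exact: next_prev_state.
- rewrite move_prob_prev_state //.
  case: (coord d i.-1 =P 0%N) => [_|c_neq0]; first exact: oner_neq0.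
  have i_gt1 : (1 < i)%N by case: (i) c_neq0 => [|[|]] //; rewrite coord_eq0.
  by rewrite mulf_neq0 ?invr_eq0 ?pnatr_eq0 //; lia.
- by move=> x xt /prev_next_state; rewrite xt.
Qed.

Lemma nu_state0 d : nu sigma (d, 0%N) = 0.
Proof.
rewrite nu_no_pred => [|x x_to_d0]; first by rewrite /init_mass /= mulr0.
apply/eqP/negP => /negP x_gt0.
have x_d0 : x = (d, 0%N).
  by rewrite -(prev_next_state x_gt0) x_to_d0 /prev_state coord_eq0.
by move: (rank_next_state x_gt0); rewrite x_to_d0 x_d0 ltxx.
Qed.
End FirstVisit.

Local Close Scope ereal_scope.

Lemma sigma_leS (R : realType) (sigma : nat -> R) i :
  sigma_le sigma i.+1 = sigma_le sigma i + sigma i.+1.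
Proof. by rewrite /sigma_le big_nat_recr. Qed.

Section GeometricWeights.
Variables (R : realType) (n : nat) (sigma : nat -> R).
Hypothesis sigma_ge0 : forall j : nat, (1 <= j <= n)%N -> 0 <= sigma j.
Hypothesis sigma_sum1 : \sum_(1 <= j < n.+1) sigma j = 1.
Hypothesis sigma_le_gt : forall i : nat, (1 <= i <= n.-1)%N ->
  i%:R / n%:R < sigma_le sigma i.
Implicit Types (d : vec n) (y : tstate n).

Lemma sigma_le_gt0 k : (0 < k < n)%N -> 0 < sigma_le sigma k.
Proof.
by move=> k_range; apply: le_lt_trans (sigma_le_gt _); [rewrite divr_ge0 | lia].
Qed.

Lemma geom_p_weight k : (0 < k < n)%N ->
  (1 - geom_p n sigma k) * sigma_le sigma k = k%:R / n%:R.
Proof.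
move=> k_range; have := sigma_le_gt0 k_range.
rewrite /geom_p lt0r => /andP[s_neq0 _].
have n_neq0 : n%:R != 0 :> R by rewrite pnatr_eq0; lia.
by field; rewrite n_neq0 s_neq0.
Qed.

Lemma geom_p_ge0 k : (0 < k < n)%N -> 0 <= geom_p n sigma k.
Proof.
move=> k_range.
have k_lt : k%:R / n%:R < sigma_le sigma k by apply: sigma_le_gt; lia.
rewrite /geom_p subr_ge0 invfM mulrA ler_pdivrMr ?mul1r ?ltW //; exact: sigma_le_gt0.
Qed.

Lemma geom_p_le1 k : (0 < k < n)%N -> geom_p n sigma k <= 1.
Proof.
move=> k_range; rewrite /geom_p -subr_ge0 opprB addrC subrK.
by apply: divr_ge0; rewrite // mulr_ge0 // ltW // sigma_le_gt0.
Qed.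

Lemma pi_mass_ge0 d : 0 <= pi_mass sigma d.
Proof.
apply: prodr_ge0 => j _; have j_range : (0 < j.+1 < n)%N by have := ltn_ord j; lia.
by rewrite mulr_ge0 ?exprn_ge0 ?geom_p_ge0 // subr_ge0 geom_p_le1.
Qed.

Lemma init_mass_ge0 y : 0 <= init_mass sigma y.
Proof.
by rewrite mulr_ge0 ?pi_mass_ge0 //; case: ifP => // /sigma_ge0.
Qed.

Lemma pi_mass_incr d k : (0 < k <= n)%N ->
  pi_mass sigma (incr d k) * sigma_le sigma k = pi_mass sigma d * (k%:R / n%:R).
Proof.
case/andP=> k_gt0; rewrite leq_eqVlt => /orP[/eqP k_n | k_lt].
  have -> : incr d k = d.
    by apply/ffunP => j; rewrite ffunE; have := ltn_ord j; case: eqP => /=; lia.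
  by rewrite /sigma_le k_n sigma_sum1 divff // pnatr_eq0; lia.
have j_lt : (k.-1 < n.-1)%N by lia.
set j0 := Ordinal j_lt; have k_j0 : k = j0.+1 by rewrite /=; lia.
rewrite /pi_mass (bigD1 j0) //= [in RHS](bigD1 j0) //= ffunE -k_j0 eqxx addn1.
rewrite -(geom_p_weight (_ : (0 < k < n)%N)); last lia.
rewrite (eq_bigr (fun j : 'I_n.-1 => geom_pmf (geom_p n sigma j.+1) (d j))).
  by rewrite /geom_pmf exprS; ring.
by move=> j /negbTE j_neq; rewrite ffunE k_j0 eqSS (inj_eq val_inj) j_neq addn0.
Qed.

Lemma pi_mass_shift d i : (i < n)%N -> coord d i != 0%N ->
  pi_mass sigma (incr (decr d i) i.+1) * sigma_le sigma i.+1 * (i%:R / i.+1%:R) =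
  pi_mass sigma d * sigma_le sigma i.
Proof.
move=> i_lt c_neq0.
have i_gt0 : (0 < i)%N by case: (i) c_neq0 => //; rewrite coord_eq0.
have d_incr : d = incr (decr d i) i.
  apply/ffunP => j; rewrite !ffunE.
  case: eqP => [ji | _]; last by rewrite subn0 addn0.
  by move: c_neq0; rewrite -ji coordE /=; lia.
rewrite [in RHS]d_incr !pi_mass_incr; try lia.
have n_neq0 : n%:R != 0 :> R by rewrite pnatr_eq0; lia.
by field; rewrite n_neq0 nat1r pnatr_eq0.
Qed.

End GeometricWeights.

Unset Implicit Arguments.

Theorem lemma7 (R : realType) (n : nat) (sigma : nat -> R)
  (sigma_ge0 : forall j : nat, (1 <= j <= n)%N -> 0 <= sigma j)
  (sigma_sum1 : \sum_(1 <= j < n.+1) sigma j = 1)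
  (sigma_le_gt : forall i : nat, (1 <= i <= n.-1)%N ->
      i%:R / n%:R < sigma_le sigma i) :
  forall (d : vec n) (i : nat), (1 <= i <= n)%N ->
    nu sigma (d, i) = (pi_mass sigma d * sigma_le sigma i)%:E.
Proof.
move=> d i /andP[_ i_le_n].
have init_ge0 := init_mass_ge0 sigma_ge0 sigma_le_gt.
elim: i i_le_n d => [_ d | i IHi i_lt_n d].
  by rewrite nu_state0 // /sigma_le big_geq // mulr0.
have i1_range : (0 < i.+1 <= n)%N by [].
have [c c_d] : exists c, coord d i = c by eexists.
elim: c d c_d => [|c IHc] d c_d.
  have prev_d : prev_state (d, i.+1) = (d, i) by rewrite /prev_state c_d.
  rewrite nu_prev_state // move_prob_prev_state // c_d prev_d eqxx mule1.
  rewrite IHi; last exact: ltnW.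
  by rewrite /init_mass i1_range -EFinD sigma_leS mulrDr addrC.
have prev_d : prev_state (d, i.+1) = (incr (decr d i) i.+1, i.+1).
  by rewrite /prev_state c_d.
rewrite nu_prev_state // move_prob_prev_state // c_d prev_d.
rewrite IHc; last by rewrite coord_shift c_d.
rewrite -EFinM -EFinD /init_mass i1_range pi_mass_shift ?c_d //.
by rewrite sigma_leS mulrDr addrC.
Qed.
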